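(* Let $\mathbb{F}$ be a field of characteristic $2$ and $n\ge 1$. Let $A \in \operatorname{M}_n(\mathbb{F})$ be an invertible alternating matrix, and set $S := \begin{bmatrix} 1 & 0_{1\times n} \\ 0_{n\times 1} & A\end{bmatrix}$. Let $M \in \operatorname{M}_n(\mathbb{F})$ be nilpotent and $A$-symmetric. Then the following are equivalent: (i) $M$ is $A$-alternating; (ii) for every $X \in \mathbb{F}^n$, the matrix $M_X := \begin{bmatrix} 0 & X^T A^T \\ X & M \end{bmatrix} \in \operatorname{M}_{n+1}(\mathbb{F})$ is nilpotent. Moreover, if (i) holds then $M_X$ is $S$-alternating for every $X \in \mathbb{F}^n$.
   Context: A square matrix $A$ is alternating if $X^T A X = 0$ for all column vectors $X$ (in characteristic $2$: symmetric with zero diagonal). Given square matrices $B$ and $M$ of the same size, $M$ is $B$-symmetric (resp. $B$-alternating) if $BM$ is symmetric (resp. alternating). *)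

From HB Require Import structures.
From mathcomp Require Import all_boot all_order all_algebra.
Set Implicit Arguments. Unset Strict Implicit. Unset Printing Implicit Defensive.
Import GRing.Theory.
Local Open Scope ring_scope.

Definition alternating_mx (F : fieldType) (n : nat) (A : 'M[F]_n) : Prop :=
  forall X : 'cV[F]_n, X^T *m A *m X = 0.

Definition symmetric_mx (F : fieldType) (n : nat) (A : 'M[F]_n) : Prop :=
  A^T = A.

Definition B_symmetric (F : fieldType) (n : nat) (B M : 'M[F]_n) : Prop :=
  symmetric_mx (B *m M).

Definition B_alternating (F : fieldType) (n : nat) (B M : 'M[F]_n) : Prop :=
  alternating_mx (B *m M).

Definition nilpotent_mx (F : fieldType) (n : nat) (M : 'M[F]_n) : Prop :=
  exists k : nat, M ^+ k = 0.

Definition S_mx (F : fieldType) (n : nat) (A : 'M[F]_n) : 'M[F]_(1 + n) :=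
  block_mx (1%:M : 'M[F]_1) 0 0 A.

Definition MX_mx (F : fieldType) (n : nat) (A M : 'M[F]_n) (X : 'cV[F]_n)
  : 'M[F]_(1 + n) :=
  block_mx (0 : 'M[F]_1) (X^T *m A^T) X M.

From HB Require Import structures.
From mathcomp Require Import all_boot all_order all_algebra zify.
Import GRing.Theory.
Set Implicit Arguments.
Unset Strict Implicit.
Unset Printing Implicit Defensive.

Local Open Scope ring_scope.

(* In characteristic 2 the alternating matrix A is symmetric, and since A M is symmetric,
   A M^(2i) = (M^i)^T A M^i and A M^(2i+1) = (M^i)^T (A M) M^i.  Hence if A M is alternating,
   q_j := X^T A M^j X vanishes for every j.  Write M_X = P + Q with P = [0 0; X M] nilpotent
   and Q = [0 X^T A; 0 0]; the only entry of Q P^(j+1) Q is q_j X^T A, so no term of the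
   expansion of (P + Q)^k contains Q twice, and M_X is nilpotent.
   Conversely, the corner entries s_k of M_X^k satisfy s_(k+1) = sum_(i<k) s_i q_(k-1-i),
   i.e. S(t) (1 - t^2 Q(t)) = 1 for the generating functions; when both S and Q are
   polynomials this forces Q = 0, and q_1 = 0 says that A M is alternating.  The last claim
   is a direct block computation, the two cross terms of Y^T S M_X Y being equal. *)

Lemma exprDn_sandwich0 (R : pzRingType) (P Q : R) k :
  (forall j, Q * P ^+ j * Q = 0) ->
  (P + Q) ^+ k = P ^+ k + \sum_(i < k) P ^+ i * Q * P ^+ (k - i.+1).
Proof.
move=> QPQ; elim: k => [|k IHk]; first by rewrite big_ord0 !expr0 addr0.
have sum_QPQ : \sum_(i < k) P ^+ i * Q * P ^+ (k - i.+1) * Q = 0.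
  by rewrite big1 // => i _; rewrite -!mulrA (mulrA Q) QPQ mulr0.
rewrite exprSr IHk mulrDl !mulrDr !mulr_suml sum_QPQ addr0 -exprSr -addrA.
rewrite big_ord_recr /= subnn expr0 mulr1; congr (_ + _).
by rewrite addrC; congr (_ + _); apply: eq_bigr => i _; rewrite -mulrA -exprSr subSn.
Qed.

Lemma exprDn_sandwich0_eq0 (R : pzRingType) (P Q : R) K :
  P ^+ K = 0 -> (forall j, Q * P ^+ j * Q = 0) -> (P + Q) ^+ (K + K) = 0.
Proof.
move=> PK QPQ; have PK_le m : (K <= m)%N -> P ^+ m = 0.
  by move=> leKm; rewrite -(subnKC leKm) exprD PK mul0r.
rewrite exprDn_sandwich0 // PK_le ?leq_addr // add0r big1 // => i _.
have [leKi | ltiK] := leqP K i; first by rewrite PK_le // !mul0r.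
by rewrite (PK_le (K + K - i.+1)%N) ?mulr0 //; have := ltn_ord i; lia.
Qed.

Lemma alternating_mx_sym (F : fieldType) n (A : 'M[F]_n) :
  2%N \in [pchar F] -> alternating_mx A -> A^T = A.
Proof.
move=> pchar2 altA.
have polar (X Y : 'cV_n) : X^T *m A *m Y + Y^T *m A *m X = 0.
  by have := altA (X + Y); rewrite !raddfD /= !mulmxDl !altA add0r addr0 addrC.
apply/matrixP => i j; have /matrixP/(_ 0 0) := polar (delta_mx i 0) (delta_mx j 0).
rewrite !trmx_delta -!rowE -!colE !mxE => /eqP.
by rewrite addr_eq0 oppr_pchar2 // => /eqP.
Qed.

Lemma alternating_mx_congruence (F : fieldType) m n (A : 'M[F]_n) (P : 'M[F]_(n, m)) :
  alternating_mx A -> alternating_mx (P^T *m A *m P).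
Proof. by move=> altA X; rewrite -(altA (P *m X)) trmx_mul !mulmxA. Qed.

Lemma alternating_mx_mul_expr (F : fieldType) n (A M : 'M[F]_n) j :
  A^T = A -> (A *m M)^T = A *m M -> alternating_mx A -> alternating_mx (A *m M) ->
  alternating_mx (A *m M ^+ j).
Proof.
move=> symA symAM altA altAM.
have trM_A : M^T *m A = A *m M by rewrite -symAM trmx_mul symA.
have trMX_A i : (M ^+ i)^T *m A = A *m M ^+ i.
  elim: i => [|i IHi]; first by rewrite expr0 trmx1 mul1mx mulmx1.
  rewrite exprSr -mulmxE trmx_mul -mulmxA IHi mulmxA trM_A -mulmxA.
  by congr (_ *m _); rewrite mulmxE -exprS exprSr.
rewrite -(odd_double_half j) -addnn; case: (odd j) => /=; set i := j./2.
- have -> : A *m M ^+ (1 + (i + i)) = (M ^+ i)^T *m (A *m M) *m M ^+ i.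
    by rewrite addnCA exprD exprS -!mulmxE !mulmxA trMX_A.
  exact: alternating_mx_congruence.
- have -> : A *m M ^+ (0 + (i + i)) = (M ^+ i)^T *m A *m M ^+ i.
    by rewrite add0n exprD -mulmxE mulmxA trMX_A.
  exact: alternating_mx_congruence.
Qed.

Lemma eventually0_last_neq0 (R : zmodType) (u : nat -> R) K i :
  (forall k, (K <= k)%N -> u k = 0) -> u i != 0 ->
  exists2 m, u m != 0 & forall k, (m < k)%N -> u k = 0.
Proof.
move=> uK ui; have ub k : u k != 0 -> (k <= K)%N.
  by apply: contraR; rewrite -ltnNge => /ltnW /uK ->; rewrite eqxx.
have [m um m_max] := ex_maxnP (ex_intro _ i ui) ub.
exists m => // k ltmk; apply/eqP; apply: contraTT ltmk => /m_max.
by rewrite leqNgt.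
Qed.

Lemma convolution_recursion_eq0 (R : idomainType) (s q : nat -> R) K L :
  s 0%N = 1 -> (forall k, (K <= k)%N -> s k = 0) -> (forall j, (L <= j)%N -> q j = 0) ->
  (forall k, s k.+1 = \sum_(i < k) s i * q (k - i.+1)%N) -> forall j, q j = 0.
Proof.
move=> s0 sK qL rec j; apply/eqP/contraT => qj.
have [m qm qm_last] := eventually0_last_neq0 qL qj.
have [k sk sk_last] : exists2 k, s k != 0 & forall k', (k < k')%N -> s k' = 0.
  by apply: (eventually0_last_neq0 sK (i := 0%N)); rewrite s0 oner_neq0.
have ltk : (k < (k + m).+1)%N by rewrite ltnS leq_addr.
have := rec (k + m).+1; rewrite (bigD1 (Ordinal ltk)) //= big1 ?addr0.
  rewrite sk_last; last by lia.
  rewrite [((k + m).+1 - _)%N](_ : _ = m) => [/esym/eqP|]; last by lia.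
  by rewrite mulf_eq0 (negPf sk) (negPf qm).
move=> i /eqP neq_ik; have [ltik | ltki | eq_ik] := ltngtP i k.
- by rewrite qm_last ?mulr0 //; lia.
- by rewrite sk_last ?mul0r.
- by case: neq_ik; apply: val_inj.
Qed.

Section BorderedMatrix.

Variables (F : fieldType) (n : nat) (B : 'rV[F]_n) (X : 'cV[F]_n) (M : 'M[F]_n).

Local Notation N := (block_mx (0 : 'M[F]_1) B X M).

Lemma exprS_lower_bordered k :
  (block_mx (0 : 'M[F]_1) 0 X M) ^+ k.+1 = block_mx 0 0 (M ^+ k *m X) (M ^+ k.+1).
Proof.
elim: k => [|k IHk]; first by rewrite !expr1 expr0 mul1mx.
rewrite exprSr IHk -mulmxE mulmx_block !mulmx0 !mul0mx !add0r.
by rewrite mulmxE -exprSr.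
Qed.

Lemma nilpotent_bordered_mx :
  nilpotent_mx M -> (forall j, B *m M ^+ j *m X = 0) -> nilpotent_mx N.
Proof.
move=> [K MK] BMX; pose P := block_mx (0 : 'M[F]_1) 0 X M.
pose Q : 'M[F]_(1 + n) := block_mx 0 B 0 0.
have -> : N = P + Q by rewrite add_block_mx !addr0 add0r.
exists (K.+1 + K.+1)%N; apply: exprDn_sandwich0_eq0.
  by rewrite exprS_lower_bordered exprSr MK mul0r mul0mx block_mx0.
by case=> [|j]; rewrite ?expr0 ?mulr1 ?exprS_lower_bordered -!mulmxE !mulmx_block
  !mulmx0 !mul0mx ?add0r ?addr0 ?mulmxA ?BMX ?mul0mx block_mx0.
Qed.

Lemma bordered_exprSr k :
  N ^+ k.+1 = block_mx (ursubmx (N ^+ k) *m X)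
                       (ulsubmx (N ^+ k) *m B + ursubmx (N ^+ k) *m M)
                       (drsubmx (N ^+ k) *m X)
                       (dlsubmx (N ^+ k) *m B + drsubmx (N ^+ k) *m M).
Proof.
by rewrite exprSr -mulmxE -{1}[N ^+ k]submxK mulmx_block !mulmx0 !add0r.
Qed.

Lemma ursubmx_bordered_expr k :
  ursubmx (N ^+ k) = \sum_(i < k) ulsubmx (N ^+ i) 0 0 *: (B *m M ^+ (k - i.+1)).
Proof.
elim: k => [|k IHk]; first by rewrite big_ord0 expr0 -[1]/(1%:M) scalar_mx_block block_mxKur.
rewrite bordered_exprSr block_mxKur IHk big_ord_recr /= subnn expr0 mulmx1 addrC.
rewrite {1}[ulsubmx _]mx11_scalar mul_scalar_mx mulmx_suml; congr (_ + _).
by apply: eq_bigr => i _; rewrite -scalemxAl -mulmxA mulmxE -exprSr subSn.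
Qed.

Lemma ulsubmx_bordered_exprS k :
  ulsubmx (N ^+ k.+1) 0 0 =
  \sum_(i < k) ulsubmx (N ^+ i) 0 0 * (B *m M ^+ (k - i.+1) *m X) 0 0.
Proof.
rewrite bordered_exprSr block_mxKul ursubmx_bordered_expr mulmx_suml summxE.
by apply: eq_bigr => i _; rewrite -scalemxAl mxE.
Qed.

Lemma nilpotent_bordered_mxP :
  nilpotent_mx M -> nilpotent_mx N <-> forall j, B *m M ^+ j *m X = 0.
Proof.
move=> nilM; split=> [[K NK] j|]; last exact: nilpotent_bordered_mx.
have [L ML] := nilM; apply/matrixP => i i'; rewrite !ord1 [RHS]mxE.
apply: (convolution_recursion_eq0 (s := fun k => ulsubmx (N ^+ k) 0 0)
          (q := fun l => (B *m M ^+ l *m X) 0 0) (K := K) (L := L)).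
- by rewrite expr0 -[1]/(1%:M) scalar_mx_block block_mxKul mxE.
- by move=> k leKk; rewrite -(subnKC leKk) exprD NK mul0r -block_mx0 block_mxKul mxE.
- by move=> l leLl; rewrite -(subnKC leLl) exprD ML mul0r mulmx0 mul0mx mxE.
- exact: ulsubmx_bordered_exprS.
Qed.

End BorderedMatrix.

Lemma trmx11 (R : Type) (C : 'M[R]_1) : C^T = C.
Proof. by apply/matrixP => i j; rewrite !ord1 mxE. Qed.

Lemma S_mx_alternating_MX_mx (F : fieldType) n (A M : 'M[F]_n) (X : 'cV[F]_n) :
  2%N \in [pchar F] -> alternating_mx (A *m M) -> B_alternating (S_mx A) (MX_mx A M X).
Proof.
move=> pchar2 altAM Y; rewrite /S_mx /MX_mx mulmx_block !mulmx0 !mul0mx !addr0 !add0r mul1mx.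
rewrite -[Y]vsubmxK tr_col_mx mul_row_block mul_row_col !mulmx0 !add0r mulmxDl altAM addr0.
set t := usubmx Y; set Z := dsubmx Y.
have -> : t^T *m (X^T *m A^T) *m Z = (Z^T *m (A *m X) *m t)^T.
  by rewrite !trmx_mul !trmxK !mulmxA.
by rewrite trmx11 -mulr2n -scaler_nat (pcharf0 pchar2) scale0r.
Qed.

Theorem lemma3p1 (F : fieldType) (n : nat) (A M : 'M[F]_n) :
  2%N \in [pchar F] ->
  (1 <= n)%N ->
  A \in unitmx ->
  alternating_mx A ->
  nilpotent_mx M ->
  B_symmetric A M ->
  (B_alternating A M <-> forall X : 'cV[F]_n, nilpotent_mx (MX_mx A M X)) /\
  (B_alternating A M -> forall X : 'cV[F]_n, B_alternating (S_mx A) (MX_mx A M X)).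
Proof.
move=> pchar2 _ _ altA nilM symAM.
have symA := alternating_mx_sym pchar2 altA.
have nilMX_P X := nilpotent_bordered_mxP (X^T *m A^T) X nilM.
split=> [|altAM X]; last exact: S_mx_alternating_MX_mx.
split=> [altAM X | nilMX X].
  by apply/nilMX_P => j; rewrite symA -(mulmxA _ A); exact: alternating_mx_mul_expr.
by have := (nilMX_P X).1 (nilMX X) 1%N; rewrite symA expr1 !mulmxA.
Qed.
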